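(* Fix $n\ge1$ and let $\mathcal A_n=\{(a_1,\dots,a_n):a_k\in\mathbb Z_{\ge0},\ \sum_{i=1}^n i a_i=n\}$. For $\theta>0$ let $\mathbf A_n$ be an $\mathcal A_n$-valued random variable with the Ewens sampling formula distribution $$P\{\mathbf A_n=(a_1,\dots,a_n)\}=\frac{n!}{\theta_{(n)}}\prod_{j=1}^n\Big(\frac\theta j\Big)^{a_j}\frac1{a_j!},\qquad \theta_{(n)}=\theta(\theta+1)\cdots(\theta+n-1).$$ Then, as $\theta\to\infty$, the family of laws of $\mathbf A_n$ satisfies an LDP on $\mathcal A_n$ with speed $\log\theta$ and rate function $$I_{\mathrm{esf}}(\mathbf a)=n-\sum_{i=1}^n a_i.$$
   Context: $\mathbf A_n$ records, for a random sample of size $n$ from a population distributed as $PD(\theta)$, the numbers $A_k$ of alleles appearing exactly $k$ times. An LDP with speed $\log\theta$ uses normalization $(\log\theta)^{-1}\log$ as $\theta\to\infty$. *)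

From HB Require Import structures.
From mathcomp Require Import all_boot all_order all_algebra.
From mathcomp Require Import all_classical all_reals all_analysis.
Set Implicit Arguments. Unset Strict Implicit. Unset Printing Implicit Defensive.
Import Order.TTheory GRing.Theory Num.Theory.
Import numFieldNormedType.Exports.
Local Open Scope ring_scope.

(* The state space: a = (a_1,...,a_n) is encoded as a : {ffun 'I_n -> 'I_n.+1},
   with a_j = a (j-1).  Any nonnegative integer vector with sum_i i a_i = n has
   a_i <= n, so the bound 'I_n.+1 loses nothing. *)
Definition Acal (n : nat) : {set {ffun 'I_n -> 'I_n.+1}} :=
  [set a : {ffun 'I_n -> 'I_n.+1} | (\sum_(j < n) j.+1 * a j)%N == n].

Definition rising {R : realType} (t : R) (n : nat) : R :=
  \prod_(i < n) (t + i%:R).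

Definition esf {R : realType} (n : nat) (t : R) (a : {ffun 'I_n -> 'I_n.+1}) : R :=
  (n`!)%:R / rising t n *
  \prod_(j < n) ((t / (j.+1)%:R) ^+ (a j) / ((a j : nat)`!)%:R).

Definition probF {R : realType} {T : finType} (p : T -> R) (F : {set T}) : R :=
  \sum_(x in F) p x.

Definition elog {R : realType} (x : R) : \bar R :=
  if x == 0 then (-oo)%E else (ln x)%:E.

Definition inf_on {R : realType} {T : finType} (I : T -> R) (F : {set T}) : \bar R :=
  \big[Order.min/(+oo)%E]_(x in F) (I x)%:E.

(* Large deviation principle, as theta -> +oo, with speed log theta, for a
   family of laws p theta (pmfs on the finite set S with discrete topology,
   so every subset of S is both open and closed) with rate function I:
   - I is a rate function: I >= 0 (lower semicontinuity is automatic);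
   - for every (closed) F in S: limsup (log theta)^-1 log P_theta(F) <= - inf_F I;
   - for every (open) G in S:  liminf (log theta)^-1 log P_theta(G) >= - inf_G I.
   The limsup/liminf bounds are written out as: for each real r above
   (resp. below) the bound, eventually (log theta)^-1 log P < r (resp. > r),
   after multiplying by log theta > 0. *)
Definition LDP_log_speed {R : realType} {T : finType}
    (p : R -> T -> R) (S : {set T}) (I : T -> R) : Prop :=
  [/\ (forall x, x \in S -> 0 <= I x),
      (forall F : {set T}, F \subset S -> forall r : R,
          (- inf_on I F < r%:E)%E ->
          \forall t \near +oo, (elog (probF (p t) F) < (r * ln t)%:E)%E) &
      (forall G : {set T}, G \subset S -> forall r : R,
          (r%:E < - inf_on I G)%E ->
          \forall t \near +oo, ((r * ln t)%:E < elog (probF (p t) G))%E)].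

Definition Iesf {R : realType} (n : nat) (a : {ffun 'I_n -> 'I_n.+1}) : R :=
  n%:R - \sum_(j < n) ((a j : nat)%:R).

From HB Require Import structures.
From mathcomp Require Import all_boot all_order all_algebra.
From mathcomp Require Import all_classical all_reals all_analysis.
From mathcomp Require Import ring.
Import Order.TTheory GRing.Theory Num.Theory.
Local Open Scope ring_scope.

(* By the Ewens sampling formula, P{A_n = a} = n!/theta_(n) * theta^K(a) * c(a),
   where K(a) = a_1 + ... + a_n and 0 < c(a) <= 1 does not depend on theta.
   Since theta^n <= theta_(n) <= (2 theta)^n once theta >= n, every point of
   the finite state space has probability of exact order theta^(-(n - K(a))).
   Two-sided power bounds of this kind yield the LDP on any finite space: a sum
   of finitely many terms is of the order of its largest one, so
   log P(F) / log theta tends to - min_F I. *)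

Section PowerAsymptotics.
Variable R : realType.

Lemma near_pinfty_lt_mulr_ln (c d : R) : 0 < d -> \forall t \near +oo, c < d * ln t.
Proof.
move=> d_gt0; apply: filterS (nbhs_pinfty_gt (num_real (expR (c / d)))) => t ct.
have : c / d < ln t.
  by rewrite -[c / d]expRK ltr_ln ?posrE ?expR_gt0 // (lt_trans (expR_gt0 _) ct).
by rewrite ltr_pdivrMr // mulrC.
Qed.

Lemma near_pinfty_lt_powR (C s r : R) : s < r ->
  \forall t \near +oo, C * t `^ s < t `^ r.
Proof.
move=> sr; near=> t.
have t_gt0 : 0 < t by near: t; exact: nbhs_pinfty_gt.
rewrite -[r](subrKC s) powRD ?(gt_eqF t_gt0) ?implybT // mulrC ltr_pM2l ?powR_gt0 //.
(* [C < 1 + C <= expR C], so it suffices that [C < (r - s) * ln t]. *)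
rewrite /powR gt_eqF //; apply: (@lt_trans _ _ (expR C)).
  by apply: lt_le_trans (expR_ge1Dx C); rewrite -subr_gt0 addrK ltr01.
by rewrite ltr_expR; near: t; apply: near_pinfty_lt_mulr_ln; rewrite subr_gt0.
Unshelve. all: by end_near.
Qed.

End PowerAsymptotics.

Section ExtendedLog.
Variable R : realType.

Lemma elog_lt_powR (P t r : R) : 0 <= P -> 0 < t -> P < t `^ r ->
  (elog P < (r * ln t)%:E)%E.
Proof.
move=> P_ge0 t_gt0 Pr; rewrite /elog; case: eqP => [_|/eqP P_neq0]; first exact: ltNyr.
by rewrite lte_fin -ln_powR ltr_ln // posrE ?powR_gt0 // lt0r P_neq0.
Qed.

Lemma elog_gt_powR (P t r : R) : 0 < t -> t `^ r < P ->
  ((r * ln t)%:E < elog P)%E.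
Proof.
move=> t_gt0 rP; have P_gt0 := lt_trans (powR_gt0 r t_gt0) rP.
by rewrite /elog gt_eqF // lte_fin -ln_powR ltr_ln // posrE powR_gt0.
Qed.

End ExtendedLog.

Lemma near_forall_in {U : Type} {T : finType} (F : set_system U) {FF : Filter F}
    (A : {set T}) (P : U -> T -> Prop) :
  (forall x, x \in A -> \forall u \near F, P u x) ->
  \forall u \near F, forall x, x \in A -> P u x.
Proof.
move=> AP; apply: filter_forall => x.
case: (boolP (x \in A)) => [/AP|xA]; first by apply: filterS => u Pux _.
by apply: nearW => u xA'; case/negP: xA.
Qed.

Section FiniteLDP.
Variables (R : realType) (T : finType) (p : R -> T -> R) (S : {set T}) (I : T -> R).

Hypothesis p_powR : forall x, x \in S -> exists c C : R, 0 < c /\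
  \forall t \near +oo, c * t `^ (- I x) <= p t x <= C * t `^ (- I x).

Lemma near_pinfty_p_ge0 : \forall t \near +oo, forall x, x \in S -> 0 <= p t x.
Proof.
apply: near_forall_in => x xS; have [c [C [c_gt0 p_bnd]]] := p_powR _ xS.
apply: filterS p_bnd => t /= /andP[lo _].
exact: le_trans (mulr_ge0 (ltW c_gt0) (powR_ge0 _ _)) lo.
Qed.

Lemma ldp_upper_bound (F : {set T}) : F \subset S -> forall r : R,
  (- inf_on I F < r%:E)%E ->
  \forall t \near +oo, (elog (probF (p t) F) < (r * ln t)%:E)%E.
Proof.
(* [N > #|F|], so #|F| terms each below [t `^ r / N] add up to less than [t `^ r]. *)
move=> /fintype.subsetP FS r Fr; set N : R := #|F|.+1%:R.
have N_gt0 : 0 < N by rewrite ltr0n.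
have small : forall x, x \in F -> \forall t \near +oo, N * p t x < t `^ r.
  move=> x xF; have [c [C [_ p_bnd]]] := p_powR _ (FS x xF).
  have rI : - I x < r.
    rewrite -lte_fin; apply: le_lt_trans Fr.
    by rewrite EFinN leeN2 /inf_on bigmin_le_cond.
  near=> t; apply: le_lt_trans (_ : (N * C) * t `^ (- I x) < _); last first.
    by near: t; exact: near_pinfty_lt_powR.
  have /andP[_ hi] : c * t `^ (- I x) <= p t x <= C * t `^ (- I x) by near: t.
  by rewrite -mulrA ler_pM2l.
near=> t.
have t_gt0 : 0 < t by near: t; exact: nbhs_pinfty_gt.
have p_ge0 : forall x, x \in S -> 0 <= p t x by near: t; exact: near_pinfty_p_ge0.
have p_small : forall x, x \in F -> N * p t x < t `^ r.
  by near: t; exact: near_forall_in.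
apply: elog_lt_powR t_gt0 _; first by apply: sumr_ge0 => x /FS /p_ge0.
apply: (@le_lt_trans _ _ (\sum_(x in F) t `^ r / N)).
  by apply: ler_sum => x xF; rewrite ler_pdivlMr // mulrC; exact/ltW/p_small.
rewrite sumr_const -mulr_natr -mulrA gtr_pMr ?powR_gt0 //.
by rewrite mulrC ltr_pdivrMr // mul1r ltr_nat.
Unshelve. all: by end_near.
Qed.

Lemma ldp_lower_bound (G : {set T}) : G \subset S -> forall r : R,
  (r%:E < - inf_on I G)%E ->
  \forall t \near +oo, ((r * ln t)%:E < elog (probF (p t) G))%E.
Proof.
move=> /fintype.subsetP GS r rG.
have /existsP[x0 /andP[x0G rI]] : [exists x in G, r < - I x].
  apply: contraLR rG; rewrite negb_exists => /forallP rG.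
  rewrite -leNgt leeNl; apply/bigmin_geP; split=> [|x xG]; first exact: leey.
  by have := rG x; rewrite xG /= -leNgt lee_fin lerNl.
have [c [C [c_gt0 p_bnd]]] := p_powR _ (GS x0 x0G).
near=> t.
have t_gt0 : 0 < t by near: t; exact: nbhs_pinfty_gt.
have p_ge0 : forall x, x \in S -> 0 <= p t x by near: t; exact: near_pinfty_p_ge0.
have /andP[lo _] : c * t `^ (- I x0) <= p t x0 <= C * t `^ (- I x0) by near: t.
apply: elog_gt_powR t_gt0 _; apply: (@lt_le_trans _ _ (p t x0)).
  apply: lt_le_trans lo; rewrite -ltr_pdivrMl //.
  by near: t; exact: near_pinfty_lt_powR.
rewrite /probF (bigD1 x0) //= lerDl.
by apply: sumr_ge0 => x /andP[/GS /p_ge0].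
Unshelve. all: by end_near.
Qed.

Lemma LDP_log_speed_powR : (forall x, x \in S -> 0 <= I x) -> LDP_log_speed p S I.
Proof.
by move=> I_ge0; split; [exact: I_ge0 | exact: ldp_upper_bound | exact: ldp_lower_bound].
Qed.

End FiniteLDP.

Section RisingFactorial.
Variable R : realType.

Lemma rising_ge_expr m (t : R) : 0 <= t -> t ^+ m <= rising t m.
Proof.
move=> t_ge0; rewrite /rising -[m in t ^+ m]card_ord -prodr_const.
by apply: ler_prod => i _; rewrite t_ge0 lerDl ler0n.
Qed.

Lemma rising_le_expr m (t : R) : m%:R <= t -> rising t m <= (2 * t) ^+ m.
Proof.
move=> mt; rewrite /rising -[m in _ ^+ m]card_ord -prodr_const.
apply: ler_prod => i _; have it : i%:R <= t by apply: le_trans mt; rewrite ler_nat ltnW.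
by rewrite mulr2n mulrDl mul1r lerD2l it addr_ge0 // (le_trans _ it).
Qed.

Lemma rising_gt0 m (t : R) : 0 < t -> 0 < rising t m.
Proof.
by move=> t_gt0; exact: lt_le_trans (exprn_gt0 m t_gt0) (rising_ge_expr m _ (ltW t_gt0)).
Qed.

End RisingFactorial.

Section EwensSamplingFormula.
Variables (R : realType) (n : nat).
Implicit Types (t : R) (a : {ffun 'I_n -> 'I_n.+1}).

Definition allele_count a := (\sum_(j < n) (a j : nat))%N.

Definition esf_coef a : R :=
  \prod_(j < n) ((j.+1)%:R^-1 ^+ a j / ((a j : nat)`!)%:R).

Lemma esf_factor t a :
  esf t a = n`!%:R / rising t n * (t ^+ allele_count a * esf_coef a).
Proof.
rewrite /esf /allele_count /esf_coef -prodrXr -big_split /=; congr (_ * _).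
by apply: eq_bigr => j _; rewrite exprMn mulrA.
Qed.

Lemma esf_coef_gt0 a : 0 < esf_coef a.
Proof.
apply: prodr_gt0 => j _; apply: mulr_gt0; last by rewrite invr_gt0 ltr0n fact_gt0.
by apply: exprn_gt0; rewrite invr_gt0 ltr0Sn.
Qed.

Lemma esf_coef_le1 a : esf_coef a <= 1.
Proof.
apply: (@le_trans _ _ (\prod_(j < n) (1 : R))); last by rewrite big1.
apply: ler_prod => j _; rewrite ltW ?(mulr_gt0, exprn_gt0, invr_gt0, ltr0n, fact_gt0) //=.
apply: mulr_ile1; rewrite ?(exprn_ge0, invr_ge0, ler0n) //.
  by rewrite exprn_ile1 ?invr_ge0 ?ler0n // invf_le1 ?ler1n ?ltr0Sn.
by rewrite invf_le1 ?ltr0n ?fact_gt0 // ler1n fact_gt0.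
Qed.

Lemma Iesf_ge0 a : a \in Acal n -> 0 <= Iesf a :> R.
Proof.
rewrite inE => /eqP weight_n; rewrite subr_ge0 -natr_sum ler_nat.
by rewrite -[leqRHS]weight_n; apply: leq_sum => j _; exact: leq_pmull.
Qed.

Lemma esf_powR_bounds a : exists c C : R, 0 < c /\
  \forall t \near +oo, c * t `^ (- Iesf a) <= esf t a <= C * t `^ (- Iesf a).
Proof.
set K := allele_count a.
have powR_Iesf t : 0 < t -> t `^ (- Iesf a) = t ^+ K / t ^+ n.
  move=> t_gt0; rewrite /Iesf -natr_sum opprB.
  by rewrite powRB ?(gt_eqF t_gt0) ?implybT // !powR_mulrn ?ltW.
have nfact_gt0 : 0 < n`!%:R :> R by rewrite ltr0n fact_gt0.
exists (n`!%:R * esf_coef a / 2 ^+ n), n`!%:R; split.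
  by rewrite divr_gt0 ?mulr_gt0 ?esf_coef_gt0 ?exprn_gt0.
near=> t.
have t_gt0 : 0 < t by near: t; exact: nbhs_pinfty_gt.
have n_le_t : n%:R <= t by near: t; exact: nbhs_pinfty_ge.
have tn_gt0 : 0 < t ^+ n := exprn_gt0 n t_gt0.
have tK_gt0 : 0 < t ^+ K := exprn_gt0 K t_gt0.
rewrite powR_Iesf // esf_factor -/K; apply/andP; split.
  rewrite [leLHS](_ : _ = n`!%:R / (2 * t) ^+ n * (t ^+ K * esf_coef a)); last first.
    by rewrite exprMn; field; rewrite !expf_neq0 ?gt_eqF.
  rewrite ler_pM2r ?mulr_gt0 ?esf_coef_gt0 // ler_pM2l // lef_pV2 ?posrE ?rising_gt0 //.
    exact: rising_le_expr.
  by rewrite exprn_gt0 ?mulr_gt0.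
rewrite -mulrA ler_pM2l // mulrCA ler_pM2l //.
apply: le_trans (ler_piMr _ (esf_coef_le1 a)) _; first by rewrite invr_ge0 ltW ?rising_gt0.
by rewrite lef_pV2 ?posrE ?rising_gt0 // rising_ge_expr ?ltW.
Unshelve. all: by end_near.
Qed.

End EwensSamplingFormula.

Theorem theorem3p3 (R : realType) (n : nat) (hn : (1 <= n)%N) :
  LDP_log_speed (fun t : R => @esf R n t) (Acal n) (@Iesf R n).
Proof.
apply: LDP_log_speed_powR => a; last exact: Iesf_ge0.
by move=> _; exact: esf_powR_bounds.
Qed.
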